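(* Fix real numbers $a,c$ with $c\neq a$, $K_W>0$ and $\kappa\in(0,\infty)$. Consider the additive Gaussian noise channel $Y_t=X_t+V_t$, $t=1,2,\dots$, driven by the ARMA$(a,c)$ noise $S_{t+1}=cS_t+W_t$, $V_t=(c-a)S_t+W_t$, $S_1=s$, with $W_t\sim N(0,K_W)$ mutually independent and independent of the initial state, and take the nonfeedback input $X_t=Z_t$ with $Z_t\sim N(0,\kappa)$ i.i.d. and independent of the noise (i.e. the time-invariant strategy with $\Lambda=0$, $K_Z=\kappa$). Then for $\Lambda=0$, $K_Z=\kappa$ the pair $\{A,C\}$ is detectable and $\{A^*,B^{*,1/2}\}$ is stabilizable, the algebraic Riccati equation $$K=c^2K+K_W-\frac{\big(K_W+cK(c-a)\big)^2}{\kappa+K_W+(c-a)^2K}$$ has the unique nonnegative stabilizing solution $$K^\infty=\frac{-h+\sqrt{h^2+4(c-a)^2K_W\kappa}}{2(c-a)^2}\ge0,\qquad h=\kappa(1-c^2)+K_W(1-a^2),$$ and, for every $s$, the rate $\lim_{n\to\infty}\frac1{2n}\sum_{t=1}^n\log\Big(\frac{(c-a)^2K^o_t+\kappa+K_W}{K_W}\Big)$ (with $K^o_t$ the solution of the difference Riccati equation below) equals $$C^{\infty,nfb}_{LB}(\kappa)=\frac12\log\Big(\frac{(c-a)^2K^\infty+\kappa+K_W}{K_W}\Big),$$ which is an achievable lower bound on the nonfeedback capacity, for all $\kappa\in(0,\infty)$.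
   Context: $K^o_t=\mathbf E\{(S_t-\mathbf E\{S_t\mid Y^{t-1},S_1=s\})^2\mid S_1=s\}$ satisfies $K^o_{t+1}=c^2K^o_t+K_W-\frac{(K_W+cK^o_t(c-a))^2}{\kappa+K_W+(c-a)^2K^o_t}$, $K^o_1=0$, and the displayed rate equals $\lim_n\frac1n[H(Y^n\mid S_1=s)-H(V^n\mid S_1=s)]$ (differential entropies). Notation: $A=c$, $C=\Lambda+c-a$, $R=K_Z+K_W$, $A^*=c-K_WR^{-1}C$, $B=1-K_W(K_Z+K_W)^{-1}$, $B^{*,1/2}=K_W^{1/2}B^{1/2}$; $\{A,C\}$ is detectable if there is $G\in\mathbb R$ with $|A-GC|<1$; $\{A^*,B^{*,1/2}\}$ is stabilizable if there is $G\in\mathbb R$ with $|A^*-B^{*,1/2}G|<1$. A solution $K\ge0$ of the Riccati equation is stabilizing if $|c-M(c-a)|<1$, where $M=\frac{K_W+cK(c-a)}{\kappa+K_W+(c-a)^2K}$. *)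

From Stdlib Require Import Reals Lra.
From Coquelicot Require Import Coquelicot.
Open Scope R_scope.

Fixpoint sumlt (f : nat -> R) (n : nat) : R :=
  match n with O => 0 | S m => sumlt f m + f m end.

Definition matA (c : R) : R := c.
Definition matC (Lambda c a : R) : R := Lambda + c - a.
Definition matR (KZ KW : R) : R := KZ + KW.
Definition matAstar (Lambda c a KZ KW : R) : R :=
  c - KW * / matR KZ KW * matC Lambda c a.
Definition matB (KZ KW : R) : R := 1 - KW * / (KZ + KW).
Definition matBstar_half (KZ KW : R) : R := sqrt KW * sqrt (matB KZ KW).

Definition detectable (A C : R) : Prop := exists G : R, Rabs (A - G * C) < 1.
Definition stabilizable (A Bh : R) : Prop := exists G : R, Rabs (A - Bh * G) < 1.

Definition riccati (a c KW kappa K : R) : R :=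
  c ^ 2 * K + KW - (KW + c * K * (c - a)) ^ 2 / (kappa + KW + (c - a) ^ 2 * K).

Definition gainM (a c KW kappa K : R) : R :=
  (KW + c * K * (c - a)) / (kappa + KW + (c - a) ^ 2 * K).

Definition stabilizing (a c KW kappa K : R) : Prop :=
  Rabs (c - gainM a c KW kappa K * (c - a)) < 1.

(* Ko a c KW kappa i = K^o_{i+1}: K^o_1 = 0, K^o_{t+1} = riccati (K^o_t). *)
Fixpoint Ko (a c KW kappa : R) (i : nat) : R :=
  match i with
  | O => 0
  | S j => riccati a c KW kappa (Ko a c KW kappa j)
  end.

Definition rate_n (a c KW kappa : R) (n : nat) : R :=
  / (2 * INR n) *
  sumlt (fun i => ln (((c - a) ^ 2 * Ko a c KW kappa i + kappa + KW) / KW)) n.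

Definition hh (a c KW kappa : R) : R := kappa * (1 - c ^ 2) + KW * (1 - a ^ 2).

Definition Kinf (a c KW kappa : R) : R :=
  (- hh a c KW kappa + sqrt (hh a c KW kappa ^ 2 + 4 * (c - a) ^ 2 * KW * kappa))
  / (2 * (c - a) ^ 2).

Definition C_LB_nfb (a c KW kappa : R) : R :=
  / 2 * ln (((c - a) ^ 2 * Kinf a c KW kappa + kappa + KW) / KW).

(* For a gain M, the one-step error variance of the estimator with gain M is
   (c - M (c - a))^2 K + M^2 kappa + (1 - M)^2 K_W, and the Riccati map is its
   minimum over M, attained at M = gainM K.  Hence the map is nonnegative and
   monotone on K >= 0, so K^o_t increases from K^o_1 = 0 and stays below any
   nonnegative fixed point.  Clearing the denominator, the nonnegative fixed
   points are the nonnegative roots of (c-a)^2 K^2 + h K - K_W kappa, whose roots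
   have product -K_W kappa / (c-a)^2 < 0, so K^infinity is the only one.  The
   monotone sequence K^o_t therefore converges to K^infinity, and the rate, a
   Cesaro mean of a continuous function of K^o_t, converges to C_LB.  Finally, a
   positive fixed point satisfies K = F^2 K + M^2 kappa + (1 - M)^2 K_W with
   F = c - M (c - a) and M = gainM K, which forces F^2 < 1: it is stabilizing. *)
From Stdlib Require Import Reals Lra Lia.
From Coquelicot Require Import Coquelicot.
Open Scope R_scope.

Lemma detectable_of_neq0 (A C : R) : C <> 0 -> detectable A C.
Proof.
  intros hC. exists (A / C).
  replace (A - A / C * C) with 0 by (field; exact hC).
  rewrite Rabs_R0; lra.
Qed.

Lemma stabilizable_of_neq0 (A B : R) : B <> 0 -> stabilizable A B.
Proof.
  intros hB. exists (A / B).
  replace (A - B * (A / B)) with 0 by (field; exact hB).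
  rewrite Rabs_R0; lra.
Qed.

Lemma matBstar_half_pos (KZ KW : R) : 0 < KZ -> 0 < KW -> 0 < matBstar_half KZ KW.
Proof.
  intros hKZ hKW. unfold matBstar_half, matB.
  replace (1 - KW * / (KZ + KW)) with (KZ / (KZ + KW)) by (field; lra).
  apply Rmult_lt_0_compat; apply sqrt_lt_R0; [exact hKW|].
  apply Rdiv_lt_0_compat; lra.
Qed.

Lemma sumlt_S (u : nat -> R) (m : nat) : sumlt u (S m) = sum_f_R0 u m.
Proof. induction m as [|m IH]; simpl in *; [ring | now rewrite <- IH]. Qed.

Lemma is_lim_seq_sumlt_mean (u : nat -> R) (l : R) :
  is_lim_seq u l -> is_lim_seq (fun n => sumlt u n / INR n) l.
Proof.
  intros hu. apply is_lim_seq_Reals in hu.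
  apply is_lim_seq_Reals.
  intros eps heps. destruct (Cesaro_1 u l hu eps heps) as [N hN].
  exists (S N). intros [|m] hm; [lia|].
  rewrite sumlt_S. apply (hN (S m)). lia.
Qed.

Lemma fixed_point_of_iterates (f : R -> R) (u : nat -> R) (l : R) :
  (forall n, u (S n) = f (u n)) -> continuity_pt f l -> is_lim_seq u l -> l = f l.
Proof.
  intros hu hf hl.
  assert (hfl : is_lim_seq (fun n => u (S n)) (f l)).
  { apply (is_lim_seq_ext (fun n => f (u n))); [intros n; now rewrite hu|].
    now apply is_lim_seq_continuous. }
  apply is_lim_seq_incr_1, is_lim_seq_unique in hl.
  apply is_lim_seq_unique in hfl.
  apply Rbar_finite_eq. now rewrite <- hl, <- hfl.
Qed.

Section Riccati.

Variables a c KW kappa : R.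
Hypothesis KW_pos : 0 < KW.
Hypothesis kappa_pos : 0 < kappa.

Definition innovation_var (K : R) : R := kappa + KW + (c - a) ^ 2 * K.

Definition gain_cost (M K : R) : R :=
  (c - M * (c - a)) ^ 2 * K + M ^ 2 * kappa + (1 - M) ^ 2 * KW.

Definition riccati_quad (K : R) : R :=
  (c - a) ^ 2 * K ^ 2 + hh a c KW kappa * K - KW * kappa.

Lemma innovation_var_pos (K : R) : 0 <= K -> 0 < innovation_var K.
Proof.
  intros hK. unfold innovation_var.
  assert (0 <= (c - a) ^ 2 * K) by (apply Rmult_le_pos; [apply pow2_ge_0 | lra]).
  lra.
Qed.

Lemma gain_cost_riccati (M K : R) : 0 <= K ->
  gain_cost M K =
  riccati a c KW kappa K + innovation_var K * (M - gainM a c KW kappa K) ^ 2.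
Proof.
  intros hK. pose proof (innovation_var_pos K hK).
  unfold gain_cost, riccati, gainM, innovation_var in *. field. lra.
Qed.

Lemma riccati_le_gain_cost (M K : R) : 0 <= K ->
  riccati a c KW kappa K <= gain_cost M K.
Proof.
  intros hK. rewrite (gain_cost_riccati M K hK).
  pose proof (innovation_var_pos K hK).
  pose proof (pow2_ge_0 (M - gainM a c KW kappa K)).
  nra.
Qed.

Lemma riccati_gain_cost (K : R) : 0 <= K ->
  riccati a c KW kappa K = gain_cost (gainM a c KW kappa K) K.
Proof. intros hK. rewrite (gain_cost_riccati _ K hK). ring. Qed.

Lemma gain_cost_noise_pos (M : R) : 0 < M ^ 2 * kappa + (1 - M) ^ 2 * KW.
Proof.
  pose proof (pow2_ge_0 M). pose proof (pow2_ge_0 (1 - M)).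
  destruct (Req_dec M 0) as [-> | hM]; [simpl; lra|].
  assert (0 < M ^ 2) by (apply pow2_gt_0; exact hM).
  nra.
Qed.

Lemma riccati_nonneg (K : R) : 0 <= K -> 0 <= riccati a c KW kappa K.
Proof.
  intros hK. rewrite (riccati_gain_cost K hK). unfold gain_cost.
  pose proof (gain_cost_noise_pos (gainM a c KW kappa K)).
  pose proof (pow2_ge_0 (c - gainM a c KW kappa K * (c - a))).
  nra.
Qed.

Lemma riccati_le (x y : R) : 0 <= x -> x <= y ->
  riccati a c KW kappa x <= riccati a c KW kappa y.
Proof.
  intros hx hxy. rewrite (riccati_gain_cost y) by lra.
  set (M := gainM a c KW kappa y).
  apply Rle_trans with (gain_cost M x); [exact (riccati_le_gain_cost M x hx)|].
  unfold gain_cost. pose proof (pow2_ge_0 (c - M * (c - a))). nra.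
Qed.

Lemma riccati_sub_id (K : R) : 0 <= K ->
  (riccati a c KW kappa K - K) * innovation_var K = - riccati_quad K.
Proof.
  intros hK. pose proof (innovation_var_pos K hK).
  unfold riccati, riccati_quad, innovation_var, hh in *. field. lra.
Qed.

Lemma riccati_fixed_iff (K : R) : 0 <= K ->
  K = riccati a c KW kappa K <-> riccati_quad K = 0.
Proof.
  intros hK. pose proof (riccati_sub_id K hK) as hsub.
  pose proof (innovation_var_pos K hK).
  split; intros hfix.
  - rewrite <- hfix, Rminus_diag, Rmult_0_l in hsub. lra.
  - assert (riccati a c KW kappa K - K = 0); [|lra].
    apply (Rmult_eq_reg_r (innovation_var K)); lra.
Qed.

Lemma stabilizing_of_pos_fixed (K : R) : 0 < K -> K = riccati a c KW kappa K ->
  stabilizing a c KW kappa K.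
Proof.
  intros hK hfix. unfold stabilizing.
  rewrite (riccati_gain_cost K) in hfix by lra. unfold gain_cost in hfix.
  set (M := gainM a c KW kappa K) in *.
  set (F := c - M * (c - a)) in *.
  pose proof (gain_cost_noise_pos M).
  assert (hF : F ^ 2 < 1).
  { apply (Rmult_lt_reg_r K); [exact hK|]. lra. }
  rewrite <- pow2_abs in hF. pose proof (Rabs_pos F). nra.
Qed.

Lemma Ko_nonneg (n : nat) : 0 <= Ko a c KW kappa n.
Proof.
  induction n as [|n IH]; simpl; [lra|]. exact (riccati_nonneg _ IH).
Qed.

Lemma Ko_le_S (n : nat) : Ko a c KW kappa n <= Ko a c KW kappa (S n).
Proof.
  induction n as [|n IH].
  - exact (riccati_nonneg 0 (Rle_refl 0)).
  - exact (riccati_le _ _ (Ko_nonneg n) IH).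
Qed.

Lemma Ko_le_fixed (K : R) (n : nat) : 0 <= K -> K = riccati a c KW kappa K ->
  Ko a c KW kappa n <= K.
Proof.
  intros hK hfix. induction n as [|n IH]; simpl; [exact hK|].
  rewrite hfix. exact (riccati_le _ _ (Ko_nonneg n) IH).
Qed.

Lemma riccati_continuous (K : R) : 0 <= K -> continuity_pt (riccati a c KW kappa) K.
Proof.
  intros hK. pose proof (innovation_var_pos K hK). unfold innovation_var in *.
  apply continuity_pt_filterlim, (@ex_derive_continuous R_AbsRing R_NormedModule).
  unfold riccati. auto_derive. lra.
Qed.

Section Nondegenerate.

Hypothesis ca_neq : c <> a.

Let disc : R := hh a c KW kappa ^ 2 + 4 * (c - a) ^ 2 * KW * kappa.

Definition Kneg : R := (- hh a c KW kappa - sqrt disc) / (2 * (c - a) ^ 2).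

Lemma ca_sqr_pos : 0 < (c - a) ^ 2.
Proof. apply pow2_gt_0. lra. Qed.

Lemma hh_sqr_lt_disc : hh a c KW kappa ^ 2 < disc.
Proof.
  pose proof ca_sqr_pos.
  assert (0 < (c - a) ^ 2 * KW * kappa) by (apply Rmult_lt_0_compat; nra).
  unfold disc. lra.
Qed.

Lemma sqrt_disc_sqr : sqrt disc ^ 2 = disc.
Proof.
  pose proof hh_sqr_lt_disc. pose proof (pow2_ge_0 (hh a c KW kappa)).
  rewrite <- Rsqr_pow2. apply Rsqr_sqrt. lra.
Qed.

Lemma Rabs_hh_lt_sqrt_disc : Rabs (hh a c KW kappa) < sqrt disc.
Proof.
  rewrite <- (sqrt_pow2 (Rabs _)) by apply Rabs_pos.
  apply sqrt_lt_1_alt. rewrite pow2_abs.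
  split; [apply pow2_ge_0 | exact hh_sqr_lt_disc].
Qed.

Lemma Kinf_pos : 0 < Kinf a c KW kappa.
Proof.
  pose proof ca_sqr_pos. pose proof Rabs_hh_lt_sqrt_disc.
  pose proof (Rle_abs (hh a c KW kappa)).
  apply Rdiv_lt_0_compat; fold disc; lra.
Qed.

Lemma Kneg_neg : Kneg < 0.
Proof.
  pose proof ca_sqr_pos. pose proof Rabs_hh_lt_sqrt_disc.
  pose proof (Rle_abs (- hh a c KW kappa)). rewrite Rabs_Ropp in *.
  unfold Kneg, Rdiv. apply Rmult_neg_pos; [lra|].
  apply Rinv_0_lt_compat. lra.
Qed.

Lemma riccati_quad_factor (K : R) :
  riccati_quad K = (c - a) ^ 2 * (K - Kinf a c KW kappa) * (K - Kneg).
Proof.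
  pose proof ca_sqr_pos. pose proof sqrt_disc_sqr as hsqrt.
  unfold riccati_quad, Kinf, Kneg. fold disc.
  field_simplify; [|lra]. rewrite hsqrt. unfold disc. field. lra.
Qed.

Lemma riccati_quad_root_nonneg (K : R) : 0 <= K -> riccati_quad K = 0 ->
  K = Kinf a c KW kappa.
Proof.
  intros hK hq. rewrite riccati_quad_factor in hq.
  pose proof ca_sqr_pos. pose proof Kneg_neg.
  destruct (Rmult_integral _ _ hq) as [h | h]; [|lra].
  destruct (Rmult_integral _ _ h); lra.
Qed.

Lemma Kinf_fixed : Kinf a c KW kappa = riccati a c KW kappa (Kinf a c KW kappa).
Proof.
  pose proof Kinf_pos. apply riccati_fixed_iff; [lra|].
  rewrite riccati_quad_factor. ring.
Qed.

Lemma Ko_cvg : is_lim_seq (Ko a c KW kappa) (Kinf a c KW kappa).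
Proof.
  pose proof Kinf_pos.
  assert (hbound : forall n, Ko a c KW kappa n <= Kinf a c KW kappa).
  { intros n. apply Ko_le_fixed; [lra | exact Kinf_fixed]. }
  destruct (ex_finite_lim_seq_incr _ _ Ko_le_S hbound) as [l hl].
  assert (hl0 : 0 <= l).
  { apply (is_lim_seq_le (fun _ => 0) _ 0 l Ko_nonneg (is_lim_seq_const 0) hl). }
  assert (hfix : l = riccati a c KW kappa l).
  { apply (fixed_point_of_iterates _ (Ko a c KW kappa)); [reflexivity| |exact hl].
    exact (riccati_continuous l hl0). }
  replace (Kinf a c KW kappa) with l; [exact hl|].
  apply riccati_quad_root_nonneg; [exact hl0|]. now apply riccati_fixed_iff.
Qed.

Lemma rate_n_cvg : is_lim_seq (rate_n a c KW kappa) (C_LB_nfb a c KW kappa).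
Proof.
  set (phi := fun K => ln (((c - a) ^ 2 * K + kappa + KW) / KW)).
  assert (hphi : continuity_pt phi (Kinf a c KW kappa)).
  { pose proof (innovation_var_pos _ (Rlt_le _ _ Kinf_pos)).
    unfold innovation_var in *.
    apply continuity_pt_filterlim, (@ex_derive_continuous R_AbsRing R_NormedModule).
    unfold phi. auto_derive. apply Rdiv_lt_0_compat; lra. }
  pose proof (is_lim_seq_sumlt_mean _ _ (is_lim_seq_continuous _ _ _ hphi Ko_cvg)) as hmean.
  apply (is_lim_seq_scal_l _ (/ 2)) in hmean.
  apply (is_lim_seq_ext (fun n => / 2 * (sumlt (fun i => phi (Ko a c KW kappa i)) n / INR n))).
  - intros [|m]; unfold rate_n, phi; cbv beta; [simpl; unfold Rdiv; ring|].
    assert (0 < INR (S m)) by (apply lt_0_INR; lia).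
    field. lra.
  - exact hmean.
Qed.

End Nondegenerate.

End Riccati.

Theorem theorem5 (a c KW kappa : R) (hca : c <> a) (hKW : 0 < KW) (hkappa : 0 < kappa) :
  detectable (matA c) (matC 0 c a)
  /\ stabilizable (matAstar 0 c a kappa KW) (matBstar_half kappa KW)
  /\ 0 <= Kinf a c KW kappa
  /\ Kinf a c KW kappa = riccati a c KW kappa (Kinf a c KW kappa)
  /\ stabilizing a c KW kappa (Kinf a c KW kappa)
  /\ (forall K : R, 0 <= K -> K = riccati a c KW kappa K ->
        stabilizing a c KW kappa K -> K = Kinf a c KW kappa)
  /\ is_lim_seq (rate_n a c KW kappa) (C_LB_nfb a c KW kappa).
Proof.
  pose proof (Kinf_pos a c KW kappa hKW hkappa hca) as hKinf.
  pose proof (Kinf_fixed a c KW kappa hKW hkappa hca) as hfix.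
  split; [|split; [|split; [|split; [|split; [|split]]]]].
  - apply detectable_of_neq0. unfold matC. lra.
  - apply stabilizable_of_neq0, Rgt_not_eq, matBstar_half_pos; assumption.
  - lra.
  - exact hfix.
  - exact (stabilizing_of_pos_fixed a c KW kappa hKW hkappa _ hKinf hfix).
  - intros K hK hKfix _.
    apply (riccati_quad_root_nonneg a c KW kappa hKW hkappa hca K hK).
    now apply (riccati_fixed_iff a c KW kappa hKW hkappa K hK).
  - exact (rate_n_cvg a c KW kappa hKW hkappa hca).
Qed.
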